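(* In the second toy theory described in the context, fix any initial (pure or mixed) state and any finite sequence $Y_1,\dots,Y_m$ of Bob's measurements ($Y_k\in\{B_1,B_2\}$). Consider any finite sequence of Alice's measurements (each in $\{A_1,A_2\}$, possibly empty) and any interleaving of it with $Y_1,\dots,Y_m$ into a single sequence of measurements performed one after another. Then the joint probability distribution of the outcomes of $Y_1,\dots,Y_m$ does not depend on Alice's sequence or on the interleaving (in particular it equals the distribution obtained when Alice performs no measurement). The same holds with the roles of Alice and Bob exchanged.
   Context: Second toy theory. Let $V=\{\emptyset,-,+,\ominus,\oplus\}$ be the set of hidden values. A pure state is a quadruple $a_1^{v_1}a_2^{v_2}b_1^{v_3}b_2^{v_4}$ with $v_1,\dots,v_4\in V$, where $v_1,v_2,v_3,v_4$ are the hidden values of the observables $A_1,A_2,B_1,B_2$ respectively. A hidden value $\emptyset$ is called undetermined, $-$ and $+$ are potential values $-1$ and $+1$, and $\ominus,\oplus$ are actual values $-1$ and $+1$. A mixed state is a probability distribution over pure states; measurements act on mixed states by linearity (first sample a pure state, then apply the rules below). $A_1,A_2$ are Alice's observables, $B_1,B_2$ are Bob's; for $X$ one of them, the other observable of the same party is called its partner. Measuring a $\pm1$-valued observable $X$ on a pure state: (1) Outcome: if the hidden value of $X$ is $\emptyset$, the outcome is $\pm1$ with probability $1/2$ each; if it is $+$ or $\oplus$ the outcome is $+1$ with certainty; if it is $-$ or $\ominus$ the outcome is $-1$ with certainty. (2) Post-measurement state when the pre-measurement state is not $a_1^\emptyset a_2^\emptyset b_1^\emptyset b_2^\emptyset$: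 the hidden value of $X$ becomes the actual value of the outcome ($\oplus$ for $+1$, $\ominus$ for $-1$); if the partner of $X$ has a potential value ($+$ or $-$), this potential value flips sign with probability $1/2$ (independently), otherwise it is unchanged; the hidden values of the other party's two observables are unchanged. (3) Post-measurement state when the pre-measurement state is $a_1^\emptyset a_2^\emptyset b_1^\emptyset b_2^\emptyset$ (each outcome having probability $1/2$): measuring $A_1$ gives $a_1^\ominus a_2^\emptyset b_1^- b_2^-$ on outcome $-1$ and $a_1^\oplus a_2^\emptyset b_1^+ b_2^+$ on outcome $+1$; measuring $A_2$ gives $a_1^\emptyset a_2^\ominus b_1^- b_2^+$ on $-1$ and $a_1^\emptyset a_2^\oplus b_1^+ b_2^-$ on $+1$; measuring $B_1$ gives $a_1^- a_2^- b_1^\ominus b_2^\emptyset$ on $-1$ and $a_1^+ a_2^+ b_1^\oplus b_2^\emptyset$ on $+1$; measuring $B_2$ gives $a_1^- a_2^+ b_1^\emptyset b_2^\ominus$ on $-1$ and $a_1^+ a_2^- b_1^\emptyset b_2^\oplus$ on $+1$. *)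

From HB Require Import structures.
From mathcomp Require Import all_boot all_order all_algebra.
Set Implicit Arguments. Unset Strict Implicit. Unset Printing Implicit Defensive.
Import Order.TTheory GRing.Theory Num.Theory.
Local Open Scope ring_scope.

(* hidden values: undetermined, potential -1/+1, actual -1/+1 *)
Inductive hval := Und | PotM | PotP | ActM | ActP.
Inductive obs := A1 | A2 | B1 | B2.
Inductive party := Alice | Bob.

Definition owner (o : obs) : party :=
  match o with A1 | A2 => Alice | B1 | B2 => Bob end.
Definition partner (o : obs) : obs :=
  match o with A1 => A2 | A2 => A1 | B1 => B2 | B2 => B1 end.
Definition party_eqb (p q : party) : bool :=
  match p, q with Alice, Alice | Bob, Bob => true | _, _ => false end.
Definition obs_eqb (p q : obs) : bool :=
  match p, q with A1, A1 | A2, A2 | B1, B1 | B2, B2 => true | _, _ => false end.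

Definition pstate := obs -> hval.
Definition mk (v1 v2 v3 v4 : hval) : pstate :=
  fun o => match o with A1 => v1 | A2 => v2 | B1 => v3 | B2 => v4 end.
Definition is_und (v : hval) : bool := if v is Und then true else false.
Definition is_blank (s : pstate) : bool :=
  [&& is_und (s A1), is_und (s A2), is_und (s B1) & is_und (s B2)].
Definition upd (s : pstate) (X : obs) (v : hval) : pstate :=
  fun o => if obs_eqb o X then v else s o.

(* outcomes: true = +1, false = -1 *)
Definition actual (b : bool) : hval := if b then ActP else ActM.
Definition pot (b : bool) : hval := if b then PotP else PotM.

Definition blank_post (X : obs) (b : bool) : pstate :=
  match X with
  | A1 => mk (actual b) Und (pot b) (pot b)
  | A2 => mk Und (actual b) (pot b) (pot (~~ b))
  | B1 => mk (pot b) (pot b) (actual b) Und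
  | B2 => mk (pot b) (pot (~~ b)) Und (actual b)
  end.

Section Semantics.
Variable R : numFieldType.

Definition outcome_dist (v : hval) : seq (R * bool) :=
  match v with
  | Und => [:: (2^-1, false); (2^-1, true)]
  | PotP | ActP => [:: (1, true)]
  | PotM | ActM => [:: (1, false)]
  end.

(* rule (2): a potential value of the partner flips with probability 1/2 *)
Definition partner_dist (v : hval) : seq (R * hval) :=
  match v with
  | PotP => [:: (2^-1, PotP); (2^-1, PotM)]
  | PotM => [:: (2^-1, PotM); (2^-1, PotP)]
  | _ => [:: (1, v)]
  end.

Definition measure (s : pstate) (X : obs) : seq (R * (bool * pstate)) :=
  if is_blank s then
    [:: (2^-1, (false, blank_post X false)); (2^-1, (true, blank_post X true))]
  else
    flatten [seq [seq (p.1 * q.1,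
                       (p.2, upd (upd s X (actual p.2)) (partner X) q.2))
                 | q <- partner_dist (s (partner X))]
            | p <- outcome_dist (s X)].

Fixpoint run (s : pstate) (xs : seq obs) : seq (R * (seq bool * pstate)) :=
  match xs with
  | [::] => [:: (1, ([::], s))]
  | X :: xs' =>
      flatten [seq [seq (b.1 * r.1, (b.2.1 :: r.2.1, r.2.2)) | r <- run b.2.2 xs']
              | b <- measure s X]
  end.

(* mixed state = finitely supported distribution, given as a weighted list;
   measurements act by linearity *)
Definition run_mixed (mu : seq (R * pstate)) (xs : seq obs) : seq (R * seq bool) :=
  flatten [seq [seq (w.1 * r.1, r.2.1) | r <- run w.2 xs] | w <- mu].

Definition is_mixed_state (mu : seq (R * pstate)) : Prop :=
  all (fun w => 0 <= w.1) mu /\ \sum_(w <- mu) w.1 = 1.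

Definition select (P : party) (xs : seq obs) (outs : seq bool) : seq bool :=
  [seq p.2 | p <- zip xs outs & party_eqb (owner p.1) P].

Definition marg_prob (mu : seq (R * pstate)) (xs : seq obs) (P : party)
    (o : seq bool) : R :=
  \sum_(r <- run_mixed mu xs | select P xs r.2 == o) r.1.

Definition joint_prob (mu : seq (R * pstate)) (ys : seq obs) (o : seq bool) : R :=
  \sum_(r <- run_mixed mu ys | r.2 == o) r.1.

End Semantics.

From HB Require Import structures.
From mathcomp Require Import all_boot all_order all_algebra.
From mathcomp Require Import ring.
Import Order.TTheory GRing.Theory Num.Theory.
Local Open Scope ring_scope.

(* By linearity it suffices to treat pure states, and by induction on the
   interleaved sequence it suffices to show that a single measurement of the
   other party, averaged over its outcomes, leaves the distribution of P's
   subsequent outcomes unchanged (other_measure_invisible).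

   The key tool is locality: on a non-blank state the outcome distribution of
   P's measurements depends only on P's two hidden values (pure_prob_local,
   through the recursion local_prob).  On a non-blank state the other party's
   measurement does not touch P's values, so the claim is immediate.  On the
   blank state it turns P's values into potential ones; a short computation
   (local_prob_pot), using that an undetermined value is the even mixture of
   the two potential values, shows that the result matches measuring P's
   sequence directly on the blank state (pure_prob_blank). *)

Section NoSignalling.
Variable R : numFieldType.

Definition pure_prob (s : pstate) (ys : seq obs) (o : seq bool) : R :=
  \sum_(r <- run R s ys | r.2.1 == o) r.1.

Definition pure_marg (P : party) (s : pstate) (xs : seq obs) (o : seq bool) : R :=
  \sum_(r <- run R s xs | select P xs r.2.1 == o) r.1.

Lemma sum_run_cons s x xs (Q : pred (seq bool)) :
  \sum_(r <- run R s (x :: xs) | Q r.2.1) r.1 =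
  \sum_(b <- measure R s x) b.1 *
    \sum_(r <- run R b.2.2 xs | Q (b.2.1 :: r.2.1)) r.1.
Proof.
rewrite /= big_flatten /= big_map; apply: eq_bigr => b _.
by rewrite big_map mulr_sumr.
Qed.

Lemma sum_head_eq (L : seq (R * (seq bool * pstate))) (f : seq bool -> seq bool)
    c c' o :
  \sum_(r <- L | c :: f r.2.1 == c' :: o) r.1 =
  if c == c' then \sum_(r <- L | f r.2.1 == o) r.1 else 0.
Proof.
case: eqP => [<-|ne]; first by apply: eq_bigl => r; rewrite eqseq_cons eqxx.
by rewrite big_pred0 // => r; rewrite eqseq_cons; case: eqP.
Qed.

Lemma pure_prob_nil s o : pure_prob s [::] o = if o == [::] then 1 else 0.
Proof. by rewrite /pure_prob big_cons big_nil; case: o => //=; rewrite addr0. Qed.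

Lemma pure_prob_cons_nil s y ys : pure_prob s (y :: ys) [::] = 0.
Proof.
rewrite /pure_prob (sum_run_cons _ _ _ (pred1 [::])) big1 // => b _.
by rewrite big_pred0 ?mulr0.
Qed.

Lemma pure_prob_cons s y ys c o :
  pure_prob s (y :: ys) (c :: o) =
  \sum_(b <- measure R s y) b.1 *
    (if b.2.1 == c then pure_prob b.2.2 ys o else 0).
Proof.
rewrite /pure_prob (sum_run_cons _ _ _ (pred1 (c :: o))); apply: eq_bigr => b _.
by rewrite (sum_head_eq _ id).
Qed.

(* On a non-blank state, measuring an observable with hidden value v whose
   partner has hidden value w yields the outcome together with the new value
   of the partner with the following joint distribution. *)
Definition local_dist (v w : hval) : seq (R * (bool * hval)) :=
  flatten [seq [seq (p.1 * q.1, (p.2, q.2)) | q <- partner_dist R w]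
          | p <- outcome_dist R v].

Lemma local_dist_mass v w : \sum_(b <- local_dist v w) b.1 = 1.
Proof. by case: v; case: w; rewrite /local_dist /= ?big_cons ?big_nil /=; field. Qed.

Lemma measure_nonblank s x : ~~ is_blank s ->
  measure R s x =
  [seq (b.1, (b.2.1, upd (upd s x (actual b.2.1)) (partner x) b.2.2))
  | b <- local_dist (s x) (s (partner x))].
Proof.
move=> nb; rewrite /measure (negbTE nb) /local_dist map_flatten -map_comp.
by congr flatten; apply: eq_map => p /=; rewrite -map_comp.
Qed.

Lemma nonblank_blank_post x c : ~~ is_blank (blank_post x c).
Proof. by case: x; case: c. Qed.

Lemma nonblank_measure_post s x c q :
  ~~ is_blank (upd (upd s x (actual c)) (partner x) q).
Proof. by case: x; case: c; rewrite /is_blank /upd /= ?andbF. Qed.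

Definition is_first (y : obs) : bool := if y is (A1 | B1) then true else false.
Definition first_obs (P : party) : obs := if P is Alice then A1 else B1.
Definition second_obs (P : party) : obs := if P is Alice then A2 else B2.

(* Outcome probability of a sequence of one party's measurements, computed
   from that party's two hidden values v (first) and w (second) only. *)
Fixpoint local_prob (v w : hval) (ys : seq obs) (o : seq bool) : R :=
  match ys, o with
  | [::], [::] => 1
  | y :: ys', c :: o' =>
    if is_first y then
      \sum_(b <- local_dist v w) b.1 *
        (if b.2.1 == c then local_prob (actual b.2.1) b.2.2 ys' o' else 0)
    else
      \sum_(b <- local_dist w v) b.1 *
        (if b.2.1 == c then local_prob b.2.2 (actual b.2.1) ys' o' else 0)
  | _, _ => 0
  end.

Lemma pure_prob_local P s ys o :
  ~~ is_blank s -> all (fun y => party_eqb (owner y) P) ys ->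
  pure_prob s ys o = local_prob (s (first_obs P)) (s (second_obs P)) ys o.
Proof.
elim: ys s o => [|y ys IH] s [|c o] nb //=; rewrite ?pure_prob_nil //.
- by rewrite pure_prob_cons_nil.
move=> /andP [Py Pys]; rewrite pure_prob_cons measure_nonblank // big_map.
case: P Py Pys IH; case: y => // _ Pys IH /=;
  apply: eq_bigr => b _ /=; case: (b.2.1 == c) => //;
  by rewrite IH ?nonblank_measure_post.
Qed.

Lemma local_prob_und_second v ys o :
  local_prob v Und ys o =
  2^-1 * local_prob v PotP ys o + 2^-1 * local_prob v PotM ys o.
Proof.
elim: ys o v => [|y ys IH] [|c o] v /=; try by field.
by case: y; case: v; case: c;
  rewrite /local_dist /= ?big_cons ?big_nil /= ?IH; field.
Qed.

Lemma local_prob_und_first w ys o :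
  local_prob Und w ys o =
  2^-1 * local_prob PotP w ys o + 2^-1 * local_prob PotM w ys o.
Proof.
elim: ys o w => [|y ys IH] [|c o] w /=; try by field.
by case: y; case: w; case: c;
  rewrite /local_dist /= ?big_cons ?big_nil /= ?IH; field.
Qed.

(* Measuring an observable with a potential value reveals that value and
   leaves its partner, whose potential value was randomly flipped,
   effectively undetermined. *)
Lemma local_prob_pot b1 b2 y ys c o :
  local_prob (pot b1) (pot b2) (y :: ys) (c :: o) =
  if is_first y then (if b1 == c then local_prob (actual c) Und ys o else 0)
  else (if b2 == c then local_prob Und (actual c) ys o else 0).
Proof.
rewrite local_prob_und_second local_prob_und_first.
by case: y; case: b1; case: b2; case: c;
  rewrite /local_dist /= ?big_cons ?big_nil /=; field.
Qed.

Lemma owner_first P : owner (first_obs P) = P.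
Proof. by case: P. Qed.

Lemma owner_second P : owner (second_obs P) = P.
Proof. by case: P. Qed.

Lemma blank_post_other x b z : ~~ party_eqb (owner x) (owner z) ->
  blank_post x b z = pot (if is_first x || is_first z then b else ~~ b).
Proof. by case: x; case: z. Qed.

Lemma pure_prob_blank P s y ys c o :
  is_blank s -> party_eqb (owner y) P -> all (fun y => party_eqb (owner y) P) ys ->
  pure_prob s (y :: ys) (c :: o) =
  2^-1 * (if is_first y then local_prob (actual c) Und ys o
          else local_prob Und (actual c) ys o).
Proof.
move=> bs Py Pys; rewrite pure_prob_cons /measure bs !big_cons big_nil /= addr0.
rewrite !(pure_prob_local P) ?nonblank_blank_post //.
by case: P Py Pys; case: y => // _ _; case: c => /=; rewrite ?mulr0 ?addr0 ?add0r.
Qed.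

Lemma other_measure_blank P x s ys o :
  is_blank s -> ~~ party_eqb (owner x) P ->
  all (fun y => party_eqb (owner y) P) ys ->
  \sum_(b <- measure R s x) b.1 * pure_prob b.2.2 ys o = pure_prob s ys o.
Proof.
move=> bs Px Pys; rewrite /measure bs !big_cons big_nil /= addr0.
rewrite !(pure_prob_local P (blank_post _ _)) ?nonblank_blank_post //.
rewrite !blank_post_other ?owner_first ?owner_second //.
case: ys Pys => [|y ys].
  by rewrite pure_prob_nil; case: o => [|c o] _ /=; field.
case/andP=> Py Pys; case: o => [|c o].
  by rewrite pure_prob_cons_nil /= !mulr0 addr0.
rewrite (pure_prob_blank P) // !local_prob_pot.
by case: P Px Py Pys; case: x => // _; case: y => // _ _; case: c => /=;
  rewrite ?mulr0 ?addr0 ?add0r //; field.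
Qed.

(* No-signalling on a non-blank state: the other party's measurement does not
   touch P's hidden values, and its branches have total weight one. *)
Lemma other_measure_nonblank P x s ys o :
  ~~ is_blank s -> ~~ party_eqb (owner x) P ->
  all (fun y => party_eqb (owner y) P) ys ->
  \sum_(b <- measure R s x) b.1 * pure_prob b.2.2 ys o = pure_prob s ys o.
Proof.
move=> nb Px Pys; rewrite measure_nonblank // big_map (pure_prob_local P s) //.
have keepP z c q : party_eqb (owner z) P ->
    upd (upd s x (actual c)) (partner x) q z = s z.
  by move: Px {Pys}; case: P; case: x; case: z.
rewrite -[RHS]mul1r -(local_dist_mass (s x) (s (partner x))) big_distrl /=.
apply: eq_bigr => b _; rewrite (pure_prob_local P) ?nonblank_measure_post //.
by rewrite !keepP ?owner_first ?owner_second //; case: P {Px Pys keepP}.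
Qed.

Lemma other_measure_invisible P x s ys o :
  ~~ party_eqb (owner x) P -> all (fun y => party_eqb (owner y) P) ys ->
  \sum_(b <- measure R s x) b.1 * pure_prob b.2.2 ys o = pure_prob s ys o.
Proof.
case: (boolP (is_blank s)) => [bs|nb]; first exact: other_measure_blank.
exact: other_measure_nonblank.
Qed.

Lemma select_cons P x xs c u :
  select P (x :: xs) (c :: u) =
  if party_eqb (owner x) P then c :: select P xs u else select P xs u.
Proof. by rewrite /select /=; case: party_eqb. Qed.

Lemma pure_marg_filter P xs s o :
  pure_marg P s xs o = pure_prob s [seq x <- xs | party_eqb (owner x) P] o.
Proof.
elim: xs s o => [|x xs IH] s o.
  by rewrite /pure_marg /pure_prob !big_cons !big_nil.
rewrite /pure_marg (sum_run_cons _ _ _ (fun u => select P (x :: xs) u == o)) /=.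
case Px: (party_eqb (owner x) P); last first.
  rewrite -(other_measure_invisible P x s _ o) ?Px ?filter_all //.
  apply: eq_bigr => b _; rewrite -IH /pure_marg.
  by under eq_bigl => r do rewrite select_cons Px.
case: o => [|c o].
  rewrite pure_prob_cons_nil big1 // => b _.
  by rewrite big_pred0 ?mulr0 // => r; rewrite select_cons Px.
rewrite pure_prob_cons; apply: eq_bigr => b _.
under eq_bigl => r do rewrite select_cons Px.
by rewrite (sum_head_eq _ (select P xs)) -IH.
Qed.

Lemma sum_run_mixed mu xs (Q : pred (seq bool)) :
  \sum_(r <- run_mixed mu xs | Q r.2) r.1 =
  \sum_(w <- mu) w.1 * \sum_(r <- run R w.2 xs | Q r.2.1) r.1.
Proof.
rewrite /run_mixed big_flatten /= big_map; apply: eq_bigr => w _.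
by rewrite big_map mulr_sumr.
Qed.

Lemma marg_prob_mix mu xs P o :
  marg_prob mu xs P o = \sum_(w <- mu) w.1 * pure_marg P w.2 xs o.
Proof. exact: (sum_run_mixed mu xs (fun u => select P xs u == o)). Qed.

Lemma joint_prob_mix mu ys o :
  joint_prob mu ys o = \sum_(w <- mu) w.1 * pure_prob w.2 ys o.
Proof. exact: (sum_run_mixed mu ys (pred1 o)). Qed.

End NoSignalling.

(* The statement holds for any weighted list mu. *)
Theorem mainTheorem4 (R : realFieldType) (mu : seq (R * pstate))
    (Hmu : is_mixed_state mu) (P : party) (ys : seq obs)
    (Hys : all (fun y => party_eqb (owner y) P) ys)
    (xs : seq obs)
    (Hxs : [seq x <- xs | party_eqb (owner x) P] = ys)
    (o : seq bool) :
  marg_prob mu xs P o = joint_prob mu ys o.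
Proof.
rewrite marg_prob_mix joint_prob_mix; apply: eq_bigr => w _.
by rewrite pure_marg_filter Hxs.
Qed.
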